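(* Let $k>0$, $a\in(0,1)$, $d>0$, assume $g$ satisfies (Hg) and that (Hd) holds. Define $\phi:\mathbb R^2\to\mathbb R^2$ by $$\phi(u,v)=\Big(\frac{k+1}{k}u-\frac1k v-\frac{g(u;a)}{kd},\ u\Big).$$ Then there exist horizontal strips $U_0,U_1$ with $U_0\cap U_1=\emptyset$ and vertical strips $V_0,V_1$ with $V_0\cap V_1=\emptyset$, all contained in $[0,1]^2$, such that for $n\in\{0,1\}$: $\phi(V_n)=U_n$, $\phi$ maps the vertical boundaries of $V_n$ onto the vertical boundaries of $U_n$, and maps the horizontal boundaries of $V_n$ onto the horizontal boundaries of $U_n$.
   Context: A function $g:\mathbb R\times[0,1]\to\mathbb R$, $(u,a)\mapsto g(u;a)$, satisfies (Hg) if it is $C^1$ and for every $a\in(0,1)$: $g(0;a)=g(a;a)=g(1;a)=0$, $g'(0;a)<0$, $g'(1;a)<0$, $g'(a;a)>0$ (where $g'=\partial_u g$), $g(v;a)>0$ for $v\in(-\infty,0)\cup(a,1)$ and $g(v;a)<0$ for $v\in(0,a)\cup(1,\infty)$. Let $h(v;a,d)=(k+1)v-\frac1d g(v;a)$. Condition (Hd): there exist $y_0\in(0,a)$ and $y_1\in(a,1)$ with $h(y_0;a,d)>k+1$, $h(y_1;a,d)<0$, and $\partial_v h(v;a,d)>0$ for $v\in(0,y_0)\cup(y_1,1)$. A horizontal curve is the graph $v=v(u)$ of a continuous function on $[0,1]$ with $0\le v(u)\le1$; a vertical curve is the graph $u=u(v)$ of a continuous function on $[0,1]$ with $0\le u(v)\le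 1$. A horizontal strip is $U=\{(u,v):0\le u\le1,\ v_1(u)\le v\le v_2(u)\}$ for horizontal curves $0\le v_1(u)<v_2(u)\le1$; its horizontal boundaries are the graphs of $v_1,v_2$ and its vertical boundaries are $U\cap\{u=0\}$ and $U\cap\{u=1\}$. A vertical strip is $V=\{(u,v):0\le v\le1,\ u_1(v)\le u\le u_2(v)\}$ for vertical curves $0\le u_1(v)<u_2(v)\le1$; its vertical boundaries are the graphs of $u_1,u_2$ and its horizontal boundaries are $V\cap\{v=0\}$ and $V\cap\{v=1\}$. *)

From Stdlib Require Import Reals.
From Coquelicot Require Import Coquelicot.
Open Scope R_scope.

(* g is C^1 on R x [0,1]: there are partial derivatives gu, ga, continuous on
   R x [0,1], giving a (Frechet) first-order expansion of g within R x [0,1]. *)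
Definition C1_strip (g : R -> R -> R) : Prop :=
  exists gu ga : R -> R -> R,
    (forall u a, 0 <= a <= 1 -> forall eps, 0 < eps -> exists delta, 0 < delta /\
       forall u' a', 0 <= a' <= 1 -> Rabs (u' - u) < delta -> Rabs (a' - a) < delta ->
         Rabs (g u' a' - g u a - gu u a * (u' - u) - ga u a * (a' - a))
           <= eps * (Rabs (u' - u) + Rabs (a' - a))) /\
    (forall u a, 0 <= a <= 1 -> forall eps, 0 < eps -> exists delta, 0 < delta /\
       forall u' a', 0 <= a' <= 1 -> Rabs (u' - u) < delta -> Rabs (a' - a) < delta ->
         Rabs (gu u' a' - gu u a) < eps /\ Rabs (ga u' a' - ga u a) < eps).

Definition gprime (g : R -> R -> R) (u a : R) : R := Derive (fun v => g v a) u.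

Definition Hg (g : R -> R -> R) : Prop :=
  C1_strip g /\
  forall a, 0 < a < 1 ->
    g 0 a = 0 /\ g a a = 0 /\ g 1 a = 0 /\
    gprime g 0 a < 0 /\ gprime g 1 a < 0 /\ gprime g a a > 0 /\
    (forall v, (v < 0 \/ (a < v /\ v < 1)) -> g v a > 0) /\
    (forall v, ((0 < v /\ v < a) \/ 1 < v) -> g v a < 0).

Definition hfun (g : R -> R -> R) (k a d : R) (v : R) : R :=
  (k + 1) * v - / d * g v a.

Definition Hd (g : R -> R -> R) (k a d : R) : Prop :=
  exists y0 y1, 0 < y0 < a /\ a < y1 < 1 /\
    hfun g k a d y0 > k + 1 /\ hfun g k a d y1 < 0 /\
    forall v, ((0 < v /\ v < y0) \/ (y1 < v /\ v < 1)) ->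
      Derive (hfun g k a d) v > 0.

Definition phi (g : R -> R -> R) (k a d : R) (p : R * R) : R * R :=
  let (u, v) := p in
  ((k + 1) / k * u - / k * v - g u a / (k * d), u).

Definition cont01 (f : R -> R) : Prop :=
  forall x, 0 <= x <= 1 -> forall eps, 0 < eps -> exists delta, 0 < delta /\
    forall y, 0 <= y <= 1 -> Rabs (y - x) < delta -> Rabs (f y - f x) < eps.

Definition curve_fun (f : R -> R) : Prop :=
  cont01 f /\ forall x, 0 <= x <= 1 -> 0 <= f x <= 1.

Definition set2 := R * R -> Prop.

Definition hgraph (f : R -> R) : set2 := fun p => 0 <= fst p <= 1 /\ snd p = f (fst p).
Definition vgraph (f : R -> R) : set2 := fun p => 0 <= snd p <= 1 /\ fst p = f (snd p).

Definition strip_curves (f1 f2 : R -> R) : Prop :=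
  curve_fun f1 /\ curve_fun f2 /\ forall x, 0 <= x <= 1 -> f1 x < f2 x.

Definition hstrip (v1 v2 : R -> R) : set2 :=
  fun p => 0 <= fst p <= 1 /\ v1 (fst p) <= snd p <= v2 (fst p).
Definition vstrip (u1 u2 : R -> R) : set2 :=
  fun p => 0 <= snd p <= 1 /\ u1 (snd p) <= fst p <= u2 (snd p).

Definition setU2 (A B : set2) : set2 := fun p => A p \/ B p.
Definition setI2 (A B : set2) : set2 := fun p => A p /\ B p.

Definition hstrip_hbdry (v1 v2 : R -> R) : set2 := setU2 (hgraph v1) (hgraph v2).
Definition hstrip_vbdry (v1 v2 : R -> R) : set2 :=
  fun p => hstrip v1 v2 p /\ (fst p = 0 \/ fst p = 1).
Definition vstrip_vbdry (u1 u2 : R -> R) : set2 := setU2 (vgraph u1) (vgraph u2).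
Definition vstrip_hbdry (u1 u2 : R -> R) : set2 :=
  fun p => vstrip u1 u2 p /\ (snd p = 0 \/ snd p = 1).

Definition image2 (f : R * R -> R * R) (A : set2) : set2 :=
  fun p => exists q, A q /\ f q = p.
Definition seteq2 (A B : set2) : Prop := forall p, A p <-> B p.
Definition disjoint2 (A B : set2) : Prop := forall p, ~ (A p /\ B p).
Definition in_square (A : set2) : Prop :=
  forall p, A p -> 0 <= fst p <= 1 /\ 0 <= snd p <= 1.

From Stdlib Require Import Reals Lra ClassicalEpsilon.
From Coquelicot Require Import Coquelicot.
Open Scope R_scope.

(* With h(v) = (k+1)v - g(v;a)/d, the map is the shear phi(u,v) = ((h(u) - v)/k, u),
   whose inverse is (x,y) |-> (y, h(y) - kx).  By (Hd), h is increasing on [0,y0]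
   and on [y1,1] and covers [0,k+1] on each, so it has a continuous increasing
   inverse H there.  The vertical strip {H(v) <= u <= H(v+k)} = {0 <= h(u) - v <= k}
   is then carried by phi onto the horizontal strip {H(kx) <= y <= H(kx+1)} =
   {kx <= h(y) <= kx+1}, boundary pieces onto boundary pieces; strips built over
   the two disjoint intervals are disjoint. *)

Lemma C1_strip_derivable (g : R -> R -> R) (a : R) : C1_strip g -> 0 <= a <= 1 ->
  forall u, exists l, derivable_pt_lim (fun v => g v a) u l.
Proof.
  intros [gu [ga [Hexp _]]] Ha u. exists (gu u a). intros eps Heps.
  destruct (Hexp u a Ha (eps / 2)) as [delta [Hdelta Hd]]; [lra|].
  exists (mkposreal delta Hdelta). intros t Ht0 Ht. simpl in Ht.
  specialize (Hd (u + t) a Ha).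
  replace (u + t - u) with t in Hd by ring. replace (a - a) with 0 in Hd by ring.
  rewrite Rabs_R0, Rmult_0_r, Rminus_0_r, Rplus_0_r in Hd.
  specialize (Hd Ht Hdelta).
  set (r := (g (u + t) a - g u a) / t - gu u a).
  assert (Hr : g (u + t) a - g u a - gu u a * t = r * t) by (unfold r; field; auto).
  rewrite Hr, Rabs_mult in Hd.
  assert (Ht_pos : 0 < Rabs t) by (apply Rabs_pos_lt; auto).
  assert (Rabs r <= eps / 2) by (apply (Rmult_le_reg_r (Rabs t)); lra).
  lra.
Qed.

Section Hfun.

Variables (g : R -> R -> R) (k a d : R).
Hypothesis g_C1 : C1_strip g.
Hypothesis a_01 : 0 <= a <= 1.

Lemma hfun_derivable u : derivable_pt (hfun g k a d) u.
Proof.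
  apply ex_derive_Reals_0.
  destruct (C1_strip_derivable g a g_C1 a_01 u) as [l Hl].
  exists ((k + 1) * 1 - / d * l). apply is_derive_Reals.
  apply (derivable_pt_lim_minus (fun v => (k + 1) * v) (fun v => / d * g v a)).
  - apply derivable_pt_lim_scal, derivable_pt_lim_id.
  - now apply derivable_pt_lim_scal.
Qed.

Lemma hfun_continuous : continuity (hfun g k a d).
Proof. intro u. apply derivable_continuous_pt, hfun_derivable. Qed.

Lemma hfun_increasing p q : p < q ->
  (forall v, p < v < q -> Derive (hfun g k a d) v > 0) ->
  forall x y, p <= x <= q -> p <= y <= q -> x < y -> hfun g k a d x < hfun g k a d y.
Proof.
  intros Hpq Hpos.
  apply (derive_increasing_interv p q _ hfun_derivable Hpq).
  intros t Ht. rewrite Derive_Reals. now apply Hpos.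
Qed.

End Hfun.

Lemma inverse_exists (h : R -> R) (p q M : R) :
  continuity h -> p <= q -> h p <= 0 -> M <= h q ->
  exists H, forall c, 0 <= c <= M -> p <= H c <= q /\ h (H c) = c.
Proof.
  intros Hcont Hpq Hp Hq.
  assert (Hpre : forall c, exists y, 0 <= c <= M -> p <= y <= q /\ h y = c).
  { intro c. destruct (Rle_dec 0 c); [destruct (Rle_dec c M)|].
    - destruct (IVT_cor (fun y => h y - c) p q) as [y [Hy Hhy]]; auto.
      + apply (continuity_minus h (fct_cte c)); [easy | apply continuity_const; now intros].
      + apply Rmult_le_0_r; lra.
      + exists y. intros _. split; [easy | lra].
    - exists 0. lra.
    - exists 0. lra. }
  exists (fun c => proj1_sig (constructive_indefinite_description _ (Hpre c))).
  intro c. apply (proj2_sig (constructive_indefinite_description _ (Hpre c))).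
Qed.

Section MonotoneInverse.

Variables (h H : R -> R) (p q M : R).
Hypothesis h_incr : forall x y, p <= x <= q -> p <= y <= q -> x < y -> h x < h y.
Hypothesis H_inv : forall c, 0 <= c <= M -> p <= H c <= q /\ h (H c) = c.

Lemma incr_lt_iff x y : p <= x <= q -> p <= y <= q -> (x < y <-> h x < h y).
Proof.
  intros Hx Hy. split; [now apply h_incr|]. intro Hlt.
  destruct (Rtotal_order x y) as [|[->|Hyx]]; [easy|lra|].
  pose proof (h_incr y x Hy Hx Hyx). lra.
Qed.

Lemma incr_le_iff x y : p <= x <= q -> p <= y <= q -> (x <= y <-> h x <= h y).
Proof.
  intros Hx Hy. pose proof (incr_lt_iff y x Hy Hx). split; intro; lra.
Qed.

Lemma inverse_lt_iff c y : 0 <= c <= M -> p <= y <= q -> (H c < y <-> c < h y).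
Proof.
  intros Hc Hy. destruct (H_inv c Hc) as [HcI Hhc].
  rewrite (incr_lt_iff _ _ HcI Hy), Hhc. reflexivity.
Qed.

Lemma inverse_gt_iff c y : 0 <= c <= M -> p <= y <= q -> (y < H c <-> h y < c).
Proof.
  intros Hc Hy. destruct (H_inv c Hc) as [HcI Hhc].
  rewrite (incr_lt_iff _ _ Hy HcI), Hhc. reflexivity.
Qed.

Lemma inverse_between_iff c1 c2 u : 0 <= c1 <= M -> 0 <= c2 <= M ->
  (H c1 <= u <= H c2 <-> p <= u <= q /\ c1 <= h u <= c2).
Proof.
  intros Hc1 Hc2. destruct (H_inv c1 Hc1), (H_inv c2 Hc2).
  assert (Hu : p <= u <= q -> (H c1 <= u <-> c1 <= h u) /\ (u <= H c2 <-> h u <= c2)).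
  { intro Hu. pose proof (inverse_lt_iff c1 u Hc1 Hu). pose proof (inverse_gt_iff c2 u Hc2 Hu).
    pose proof (inverse_gt_iff c1 u Hc1 Hu). pose proof (inverse_lt_iff c2 u Hc2 Hu).
    split; split; intro; lra. }
  split.
  - intro Hb. assert (Hpq : p <= u <= q) by lra. specialize (Hu Hpq). lra.
  - intros [Hpq Hb]. specialize (Hu Hpq). lra.
Qed.

Lemma inverse_eq_iff c u : 0 <= c <= M -> (u = H c <-> p <= u <= q /\ h u = c).
Proof.
  intro Hc. pose proof (inverse_between_iff c c u Hc Hc). split; intro Hu; lra.
Qed.

Lemma inverse_strict c1 c2 : 0 <= c1 <= M -> 0 <= c2 <= M -> c1 < c2 -> H c1 < H c2.
Proof.
  intros Hc1 Hc2 Hlt. destruct (H_inv c2 Hc2) as [Hc2I Hhc2].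
  apply inverse_lt_iff; [easy | easy | lra].
Qed.

Lemma inverse_near_above c eps : 0 <= c <= M -> 0 < eps ->
  exists delta, 0 < delta /\ forall c', 0 <= c' <= M -> c' < c + delta -> H c' < H c + eps.
Proof.
  intros Hc Heps. destruct (H_inv c Hc) as [HcI Hhc].
  destruct (Rlt_le_dec (H c) q) as [Hlt|Hge].
  - set (y := Rmin q (H c + eps / 2)).
    assert (Hy : H c < y <= q /\ y < H c + eps) by (unfold y; apply Rmin_case_strong; lra).
    exists (h y - c). split.
    + pose proof (h_incr (H c) y HcI ltac:(lra) ltac:(lra)). lra.
    + intros c' Hc' Hlt'.
      assert (H c' < y) by (apply inverse_lt_iff; [easy | lra | lra]). lra.
  - exists 1. split; [lra|]. intros c' Hc' _. destruct (H_inv c' Hc'). lra.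
Qed.

Lemma inverse_near_below c eps : 0 <= c <= M -> 0 < eps ->
  exists delta, 0 < delta /\ forall c', 0 <= c' <= M -> c - delta < c' -> H c - eps < H c'.
Proof.
  intros Hc Heps. destruct (H_inv c Hc) as [HcI Hhc].
  destruct (Rlt_le_dec p (H c)) as [Hlt|Hge].
  - set (y := Rmax p (H c - eps / 2)).
    assert (Hy : p <= y < H c /\ H c - eps < y) by (unfold y; apply Rmax_case_strong; lra).
    exists (c - h y). split.
    + pose proof (h_incr y (H c) ltac:(lra) HcI ltac:(lra)). lra.
    + intros c' Hc' Hlt'.
      assert (y < H c') by (apply inverse_gt_iff; [easy | lra | lra]). lra.
  - exists 1. split; [lra|]. intros c' Hc' _. destruct (H_inv c' Hc'). lra.
Qed.

Lemma inverse_continuous c eps : 0 <= c <= M -> 0 < eps ->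
  exists delta, 0 < delta /\
    forall c', 0 <= c' <= M -> Rabs (c' - c) < delta -> Rabs (H c' - H c) < eps.
Proof.
  intros Hc Heps.
  destruct (inverse_near_above c eps Hc Heps) as [d1 [Hd1 Habove]].
  destruct (inverse_near_below c eps Hc Heps) as [d2 [Hd2 Hbelow]].
  exists (Rmin d1 d2). split; [now apply Rmin_glb_lt|].
  intros c' Hc' Hdist.
  pose proof (Rmin_l d1 d2). pose proof (Rmin_r d1 d2).
  apply Rabs_def2 in Hdist as [Hup Hlow].
  specialize (Habove c' Hc'). specialize (Hbelow c' Hc').
  assert (H c' < H c + eps) by (apply Habove; lra).
  assert (H c - eps < H c') by (apply Hbelow; lra).
  apply Rabs_def1; lra.
Qed.

Lemma inverse_affine_curve (f : R -> R) (al be : R) :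
  0 <= p -> q <= 1 -> 0 < al -> 0 <= be -> al + be <= M ->
  (forall x, f x = H (al * x + be)) -> curve_fun f.
Proof.
  intros Hp Hq Hal Hbe Hab Hf. split.
  - intros x Hx eps Heps. rewrite !Hf.
    destruct (inverse_continuous (al * x + be) eps ltac:(nra) Heps) as [delta [Hdelta Hd]].
    exists (delta / al). split; [now apply Rdiv_lt_0_compat|].
    intros y Hy Hyx. rewrite !Hf. apply Hd; [nra|].
    replace (al * y + be - (al * x + be)) with (al * (y - x)) by ring.
    rewrite Rabs_mult, (Rabs_pos_eq al) by lra.
    apply (Rmult_lt_compat_l al) in Hyx; [|easy].
    now replace (al * (delta / al)) with delta in Hyx by (field; lra).
  - intros x Hx. rewrite Hf. destruct (H_inv (al * x + be)); [nra | lra].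
Qed.

End MonotoneInverse.

Definition maps_strip (F : R * R -> R * R) (u1 u2 v1 v2 : R -> R) : Prop :=
  strip_curves u1 u2 /\ strip_curves v1 v2 /\
  in_square (vstrip u1 u2) /\ in_square (hstrip v1 v2) /\
  seteq2 (image2 F (vstrip u1 u2)) (hstrip v1 v2) /\
  seteq2 (image2 F (vstrip_vbdry u1 u2)) (hstrip_vbdry v1 v2) /\
  seteq2 (image2 F (vstrip_hbdry u1 u2)) (hstrip_hbdry v1 v2).

Section ShearStrips.

Variables (F : R * R -> R * R) (h H : R -> R) (k p q : R).
Hypothesis k_pos : 0 < k.
Hypothesis pq_01 : 0 <= p /\ q <= 1.
Hypothesis h_incr : forall x y, p <= x <= q -> p <= y <= q -> x < y -> h x < h y.
Hypothesis H_inv : forall c, 0 <= c <= k + 1 -> p <= H c <= q /\ h (H c) = c.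
Hypothesis F_shear : forall u v, F (u, v) = ((h u - v) / k, u).

Lemma image2_shear A x y : image2 F A (x, y) <-> A (y, h y - k * x).
Proof.
  split.
  - intros [[u v] [HA HF]]. rewrite F_shear in HF. injection HF as <- <-.
    now replace (h u - k * ((h u - v) / k)) with v by (field; lra).
  - intro HA. exists (y, h y - k * x). split; [easy|].
    rewrite F_shear. f_equal. field. lra.
Qed.

Let between_iff := inverse_between_iff h H p q (k + 1) h_incr H_inv.
Let eq_iff := inverse_eq_iff h H p q (k + 1) h_incr H_inv.

Lemma vstrip_iff u v : vstrip H (fun v => H (v + k)) (u, v) <->
  0 <= v <= 1 /\ p <= u <= q /\ v <= h u <= v + k.
Proof. unfold vstrip; simpl. pose proof (between_iff v (v + k) u). lra. Qed.

Lemma hstrip_iff x y : hstrip (fun x => H (k * x)) (fun x => H (k * x + 1)) (x, y) <->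
  0 <= x <= 1 /\ p <= y <= q /\ k * x <= h y <= k * x + 1.
Proof.
  unfold hstrip; simpl. pose proof (between_iff (k * x) (k * x + 1) y).
  assert (0 <= x <= 1 -> 0 <= k * x <= k) by (intro; nra). lra.
Qed.

Lemma vgraph_iff (f : R -> R) s u v : 0 <= s <= k -> (forall v, f v = H (v + s)) ->
  vgraph f (u, v) <-> 0 <= v <= 1 /\ p <= u <= q /\ h u = v + s.
Proof.
  intros Hs Hf. unfold vgraph; simpl. rewrite Hf. pose proof (eq_iff (v + s) u). lra.
Qed.

Lemma hgraph_iff (f : R -> R) s x y : 0 <= s <= 1 -> (forall x, f x = H (k * x + s)) ->
  hgraph f (x, y) <-> 0 <= x <= 1 /\ p <= y <= q /\ h y = k * x + s.
Proof.
  intros Hs Hf. unfold hgraph; simpl. rewrite Hf. pose proof (eq_iff (k * x + s) y).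
  assert (0 <= x <= 1 -> 0 <= k * x <= k) by (intro; nra). lra.
Qed.

Lemma shear_maps_strip :
  maps_strip F H (fun v => H (v + k)) (fun x => H (k * x)) (fun x => H (k * x + 1)).
Proof.
  assert (Hunit : forall x, 0 <= k * x <= k <-> 0 <= x <= 1) by (intro; nra).
  assert (Hcurve := inverse_affine_curve h H p q (k + 1) h_incr H_inv).
  split; [|split; [|split; [|split; [|split; [|split]]]]].
  - split; [apply (Hcurve _ 1 0) | split; [apply (Hcurve _ 1 k) |]];
      try (intro; f_equal; ring); try lra.
    intros v Hv. apply (inverse_strict h H p q (k + 1)); easy || lra.
  - split; [apply (Hcurve _ k 0) | split; [apply (Hcurve _ k 1) |]];
      try (intro; f_equal; ring); try lra.
    intros x Hx. apply (inverse_strict h H p q (k + 1)); easy || nra.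
  - intros [u v] Huv. apply vstrip_iff in Huv. simpl. lra.
  - intros [x y] Hxy. apply hstrip_iff in Hxy. simpl. lra.
  - intros [x y]. rewrite image2_shear, vstrip_iff, hstrip_iff. specialize (Hunit x). lra.
  - intros [x y]. rewrite image2_shear. unfold vstrip_vbdry, hstrip_vbdry, setU2; simpl.
    rewrite (vgraph_iff H 0), (vgraph_iff _ k), hstrip_iff
      by (lra || intro; f_equal; ring).
    specialize (Hunit x). nra.
  - intros [x y]. rewrite image2_shear. unfold vstrip_hbdry, hstrip_hbdry, setU2; simpl.
    rewrite vstrip_iff, (hgraph_iff _ 0), (hgraph_iff _ 1)
      by (lra || intro; f_equal; ring).
    specialize (Hunit x). nra.
Qed.

End ShearStrips.

Lemma phi_shear (g : R -> R -> R) (k a d : R) : 0 < k -> 0 < d ->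
  forall u v, phi g k a d (u, v) = ((hfun g k a d u - v) / k, u).
Proof. intros Hk Hdpos u v. unfold phi, hfun. f_equal. field. split; lra. Qed.

Theorem lemma8p2 (g : R -> R -> R) (k a d : R) :
  0 < k -> 0 < a < 1 -> 0 < d -> Hg g -> Hd g k a d ->
  exists (v10 v20 v11 v21 u10 u20 u11 u21 : R -> R),
    strip_curves v10 v20 /\ strip_curves v11 v21 /\
    strip_curves u10 u20 /\ strip_curves u11 u21 /\
    disjoint2 (hstrip v10 v20) (hstrip v11 v21) /\
    disjoint2 (vstrip u10 u20) (vstrip u11 u21) /\
    in_square (hstrip v10 v20) /\ in_square (hstrip v11 v21) /\
    in_square (vstrip u10 u20) /\ in_square (vstrip u11 u21) /\
    seteq2 (image2 (phi g k a d) (vstrip u10 u20)) (hstrip v10 v20) /\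
    seteq2 (image2 (phi g k a d) (vstrip u11 u21)) (hstrip v11 v21) /\
    seteq2 (image2 (phi g k a d) (vstrip_vbdry u10 u20)) (hstrip_vbdry v10 v20) /\
    seteq2 (image2 (phi g k a d) (vstrip_vbdry u11 u21)) (hstrip_vbdry v11 v21) /\
    seteq2 (image2 (phi g k a d) (vstrip_hbdry u10 u20)) (hstrip_hbdry v10 v20) /\
    seteq2 (image2 (phi g k a d) (vstrip_hbdry u11 u21)) (hstrip_hbdry v11 v21).
Proof.
  intros Hk Ha Hdpos [HC Hga] [y0 [y1 [Hy0 [Hy1 [Hhy0 [Hhy1 Hpos]]]]]].
  destruct (Hga a Ha) as [g0 [_ [g1 _]]].
  assert (Ha01 : 0 <= a <= 1) by lra.
  assert (h0 : hfun g k a d 0 = 0) by (unfold hfun; rewrite g0; ring).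
  assert (h1 : hfun g k a d 1 = k + 1) by (unfold hfun; rewrite g1; ring).
  pose proof (phi_shear g k a d Hk Hdpos) as Hshear.
  pose proof (hfun_increasing g k a d HC Ha01 0 y0 ltac:(lra)
                (fun v Hv => Hpos v (or_introl Hv))) as Hincr0.
  pose proof (hfun_increasing g k a d HC Ha01 y1 1 ltac:(lra)
                (fun v Hv => Hpos v (or_intror Hv))) as Hincr1.
  destruct (inverse_exists (hfun g k a d) 0 y0 (k + 1) (hfun_continuous g k a d HC Ha01))
    as [H0 HH0]; [lra.. |].
  destruct (inverse_exists (hfun g k a d) y1 1 (k + 1) (hfun_continuous g k a d HC Ha01))
    as [H1 HH1]; [lra.. |].
  destruct (shear_maps_strip _ _ H0 k 0 y0 Hk ltac:(lra) Hincr0 HH0 Hshear)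
    as (Cu0 & Cv0 & Su0 & Sv0 & I0 & IV0 & IH0).
  destruct (shear_maps_strip _ _ H1 k y1 1 Hk ltac:(lra) Hincr1 HH1 Hshear)
    as (Cu1 & Cv1 & Su1 & Sv1 & I1 & IV1 & IH1).
  exists (fun x => H0 (k * x)), (fun x => H0 (k * x + 1)),
    (fun x => H1 (k * x)), (fun x => H1 (k * x + 1)),
    H0, (fun v => H0 (v + k)), H1, (fun v => H1 (v + k)).
  do 4 (split; [assumption |]).
  split.
  { intros [x y] [A B].
    apply (hstrip_iff _ _ _ _ _ Hk Hincr0 HH0) in A.
    apply (hstrip_iff _ _ _ _ _ Hk Hincr1 HH1) in B. lra. }
  split.
  { intros [u v] [A B].
    apply (vstrip_iff _ _ _ _ _ Hk Hincr0 HH0) in A.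
    apply (vstrip_iff _ _ _ _ _ Hk Hincr1 HH1) in B. lra. }
  tauto.
Qed.
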